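(* Let $a, b, n$ be positive integers with $b>1$, $n>1$ and $\gcd(r_b(n),a)=1$. Then the Frobenius number of $S_a(b,n)$ is \[\operatorname{F}(S_a(b,n)) = \begin{cases} (n-1)\,(b^n - 1 - a) + a\, r_b(n) & \text{if } a < b^n - 1,\\ b^n - 1 - a + a\, r_b(n) & \text{if } a > b^n - 1.\end{cases}\]
   Context: For $\ell \ge 1$, $r_b(\ell) = \sum_{j=0}^{\ell-1} b^j$, and $r_b(0)=0$. For $i \ge 1$, $a_i := r_b(n) + a\, r_b(i-1)$; $S_a(b,n)$ is the numerical semigroup generated by $\{a_i : i\ge 1\}$. The Frobenius number $\operatorname{F}(S)$ of a numerical semigroup $S$ is the largest integer not in $S$. *)

From mathcomp Require Import all_boot.
Set Implicit Arguments. Unset Strict Implicit. Unset Printing Implicit Defensive.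

Definition rb (b l : nat) : nat := \sum_(j < l) b ^ j.

Definition agen (a b n i : nat) : nat := rb b n + a * rb b i.-1.

Inductive in_semigroup (G : nat -> Prop) : nat -> Prop :=
| sg_zero : in_semigroup G 0
| sg_add : forall x g, in_semigroup G x -> G g -> in_semigroup G (x + g).

Definition Sab (a b n : nat) : nat -> Prop :=
  in_semigroup (fun g => exists2 i, 0 < i & g = agen a b n i).

Definition is_frobenius (S : nat -> Prop) (F : nat) : Prop :=
  ~ S F /\ forall m, F < m -> S m.

From mathcomp Require Import all_boot zify.
Set Implicit Arguments. Unset Strict Implicit. Unset Printing Implicit Defensive.

(* Let r = r_b(n), so that b^n - 1 = (b - 1) r.  An element of S_a(b,n) is
   k r + a t, where k generators a_{e+1} are used and t = sum r_b(e) over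
   them; as gcd(r, a) = 1, t is determined modulo r by the element.

   A positive multiple of b^n - 1 written as a sum of powers of b has at
   least n(b - 1) terms: shifting all exponents by s modulo n keeps it a
   positive multiple of b^n - 1, and the n shifts together sum to
   (number of terms) * r.  Hence for 0 < c < n no c(b - 1) repunits r_b(e)
   sum to a number congruent to -c modulo r, which excludes the claimed
   Frobenius numbers (c = n - 1 when a < b^n - 1, c = 1 otherwise).
   Conversely, every t < r is a greedy sum of at most
   1 + min(r - t, n - 1)(b - 1) repunits, which makes every larger m a
   member: choose t < r with a t = m (mod r) and fill up with a_1 = r. *)

Lemma rb0 b : rb b 0 = 0.
Proof. by rewrite /rb big_ord0. Qed.

Lemma rbSl b e : rb b e.+1 = 1 + b * rb b e.
Proof.
rewrite /rb big_ord_recl expn0 big_distrr /=; congr (_ + _).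
by apply: eq_bigr => i _; rewrite expnS.
Qed.

Lemma predn_exp_rb b e : (b ^ e).-1 = b.-1 * rb b e.
Proof. exact: predn_exp. Qed.

Lemma leq_rb b e : 0 < b -> e <= rb b e.
Proof. by move=> b_gt0; elim: e => // e IH; rewrite rbSl; nia. Qed.

Lemma rb_gt0 b e : 0 < b -> 0 < e -> 0 < rb b e.
Proof. by move=> b_gt0 e_gt0; apply: leq_trans e_gt0 (leq_rb e b_gt0). Qed.

Lemma sum_expn_rb b es : 0 < b ->
  \sum_(e <- es) b ^ e = b.-1 * \sum_(e <- es) rb b e + size es.
Proof.
move=> b_gt0; elim: es => [|e es IH]; first by rewrite !big_nil muln0.
have := predn_exp_rb b e; have := expn_gt0 b e; rewrite b_gt0 /=.
rewrite !big_cons IH /= mulnDr; lia.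
Qed.

Lemma SabP a b n m :
  Sab a b n m <-> exists es, m = size es * rb b n + a * \sum_(e <- es) rb b e.
Proof.
split.
  elim=> [|x g _ [es ->] [i i_gt0 ->]]; first by exists [::]; rewrite big_nil muln0.
  by exists (i.-1 :: es); rewrite big_cons /agen /=; lia.
move=> [es ->]; elim: es => [|e es IH]; first by rewrite big_nil muln0; left.
have -> : size (e :: es) * rb b n + a * \sum_(e' <- e :: es) rb b e' =
          size es * rb b n + a * \sum_(e' <- es) rb b e' + agen a b n e.+1.
  by rewrite big_cons /agen /=; lia.
by right=> //; exists e.+1.
Qed.

Lemma Sab_pad a b n k es : size es <= k ->
  Sab a b n (k * rb b n + a * \sum_(e <- es) rb b e).
Proof.
move=> le_es_k; apply/SabP; exists (es ++ nseq (k - size es) 0).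
by rewrite size_cat size_nseq subnKC // big_cat big_nseq rb0 /= iter_addn_0 addn0.
Qed.

Lemma expn_modn_predn b e x : 0 < b -> b ^ (x %% e) = b ^ x %[mod (b ^ e).-1].
Proof.
move=> b_gt0; have be_gt0 : 0 < b ^ e by rewrite expn_gt0 b_gt0.
have be_mod : b ^ e = 1 %[mod (b ^ e).-1] by rewrite -{1}(prednK be_gt0) -addn1 modnDl.
have beq_mod q : (b ^ e) ^ q = 1 %[mod (b ^ e).-1] by rewrite -modnXm be_mod modnXm exp1n.
by rewrite {2}(divn_eq x e) expnD (mulnC (x %/ e)) expnM -modnMml beq_mod modnMml mul1n.
Qed.

Lemma sum_expn_rot b n e : \sum_(s < n) b ^ ((e + s) %% n) = rb b n.
Proof.
case: n => [|n]; first by rewrite /rb !big_ord0.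
pose rot (s : 'I_n.+1) := Ordinal (ltn_pmod (e + s) (ltn0Sn n)).
have rot_inj : injective rot.
  move=> s t /(congr1 val) /= /eqP; rewrite eqn_modDl !modn_small //.
  by move/eqP/val_inj.
by rewrite /rb [RHS](reindex_inj rot_inj).
Qed.

Lemma size_ge_of_dvd_sum_expn b n es : 1 < b -> 0 < n -> es != [::] ->
  (b ^ n).-1 %| \sum_(e <- es) b ^ e -> n * b.-1 <= size es.
Proof.
move=> b_gt1 n_gt0 es_neq0 dvd_sum; have b_gt0 : 0 < b by lia.
have rot_dvd s : (b ^ n).-1 %| \sum_(e <- es) b ^ ((e + s) %% n).
  rewrite /dvdn -modn_summ (eq_bigr (fun e => b ^ (e + s) %% (b ^ n).-1)); last first.
    by move=> e _; apply: expn_modn_predn.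
  rewrite modn_summ -/(dvdn _ _).
  have -> : \sum_(e <- es) b ^ (e + s) = b ^ s * \sum_(e <- es) b ^ e.
    by rewrite big_distrr /=; apply: eq_bigr => e _; rewrite expnD mulnC.
  exact: dvdn_mull.
have rot_ge s : (b ^ n).-1 <= \sum_(e <- es) b ^ ((e + s) %% n).
  apply: dvdn_leq (rot_dvd s); case: es es_neq0 {dvd_sum rot_dvd} => // e es _.
  by rewrite big_cons; have := expn_gt0 b ((e + s) %% n); rewrite b_gt0 /=; lia.
have : n * (b ^ n).-1 <= size es * rb b n.
  have -> : size es * rb b n = \sum_(e <- es) rb b n.
    by rewrite big_const_seq count_predT iter_addn_0 mulnC.
  rewrite -[n in n * _]card_ord -sum_nat_const.
  under [X in _ <= X]eq_bigr => e _ do rewrite -(sum_expn_rot b n e).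
  by rewrite exchange_big /=; apply: leq_sum => s _; apply: rot_ge.
by rewrite predn_exp_rb mulnA leq_pmul2r // rb_gt0.
Qed.

Lemma dvd_sum_rb_size b n es c : 1 < b -> 0 < c -> size es <= c * b.-1 ->
  rb b n %| \sum_(e <- es) rb b e + c -> n <= c.
Proof.
move=> b_gt1 c_gt0 size_es dvd_sum; case: (posnP n) => [-> // | n_gt0].
pose es' := es ++ nseq (c * b.-1 - size es) 0.
have size_es' : size es' = c * b.-1 by rewrite size_cat size_nseq subnKC.
have sum_es' : \sum_(e <- es') b ^ e = b.-1 * (\sum_(e <- es) rb b e + c).
  rewrite sum_expn_rb; last by lia.
  by rewrite size_es' big_cat big_nseq rb0 /= iter_addn_0 mul0n addn0 mulnDr (mulnC c).
have : n * b.-1 <= size es'.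
  apply: (size_ge_of_dvd_sum_expn b_gt1 n_gt0).
    by rewrite -size_eq0 size_es'; apply/eqP; nia.
  by rewrite sum_es' predn_exp_rb dvdn_mul.
by rewrite size_es' leq_pmul2r //; lia.
Qed.

Lemma sum_rb_repr b m t : 0 < b -> t < rb b m ->
  exists es, \sum_(e <- es) rb b e = t /\ (size es).-1 <= m.-1 * b.-1.
Proof.
move=> b_gt0; elim: m t => [|[|m] IH] t; first by rewrite rb0.
  by rewrite rbSl rb0 muln0 => /[!ltnS] /[!leqn0] /eqP ->; exists [::]; rewrite big_nil.
rewrite rbSl; set R := rb b m.+1 => t_lt.
have R_gt0 : 0 < R by rewrite rb_gt0.
have t_eq := divn_eq t R.
case: (leqP b (t %/ R)) => [b_le_q | q_lt_b].
  exists (nseq b m.+1); rewrite big_nseq iter_addn_0 size_nseq -/R.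
  split; last by nia.
  have : b * R <= t %/ R * R by rewrite leq_mul2r b_le_q orbT.
  nia.
have [es [sum_es size_es]] := IH (t %% R) (ltn_pmod t R_gt0).
exists (nseq (t %/ R) m.+1 ++ es).
rewrite big_cat /= big_nseq iter_addn_0 sum_es size_cat size_nseq -/R.
by split; [rewrite mulnC -t_eq | rewrite mulSn; lia].
Qed.

Lemma sum_rb_repr_near b m j : 0 < b -> 0 < j <= m ->
  exists es, \sum_(e <- es) rb b e = rb b m - j /\ (size es).-1 <= j * b.-1.
Proof.
move=> b_gt0; elim: m j => [|m IH] j j_range; first by lia.
have m_le_rb := leq_rb m b_gt0.
case: (ltnP 1 j) => [j_gt1 | j_le1].
  have [es [sum_es size_es]] := IH j.-1 ltac:(lia).
  exists (nseq b.-1 m ++ es).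
  rewrite big_cat /= big_nseq iter_addn_0 sum_es size_cat size_nseq rbSl.
  split; nia.
exists (nseq b m); rewrite big_nseq iter_addn_0 size_nseq rbSl; split; nia.
Qed.

Lemma sum_rb_repr_min b n t : 0 < b -> t < rb b n ->
  exists es, \sum_(e <- es) rb b e = t /\
             (size es).-1 <= minn (rb b n - t) n.-1 * b.-1.
Proof.
move=> b_gt0 t_lt; case: (leqP (rb b n - t) n.-1) => [near | _].
  have [es [sum_es size_es]] := @sum_rb_repr_near b n (rb b n - t) b_gt0 ltac:(lia).
  by exists es; split; first lia.
have [es [sum_es size_es]] := sum_rb_repr b_gt0 t_lt.
by exists es.
Qed.

Lemma exists_mul_modn r a m : 0 < r -> coprime r a ->
  exists2 t, t < r & a * t = m %[mod r].
Proof.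
move=> r_gt0 cop; pose x := chinese r a m 0.
have a_dvd_x : a %| x by rewrite /dvdn (chinese_modr cop) mod0n.
exists ((x %/ a) %% r); first exact: ltn_pmod.
by rewrite modnMmr mulnC divnK // (chinese_modl cop).
Qed.

Lemma notin_Sab a b n c m : 1 < b -> coprime (rb b n) a -> 0 < c < n ->
  m + c * a = (c * b.-1 + a) * rb b n -> ~ Sab a b n m.
Proof.
move=> b_gt1 cop c_range m_eq /SabP [es m_repr].
set r := rb b n in cop m_eq m_repr; set k := size es in m_repr.
set t := \sum_(e <- es) rb b e in m_repr.
have sum_eq : k * r + a * (t + c) = (c * b.-1 + a) * r by rewrite -m_eq m_repr; lia.
have r_dvd : r %| t + c.
  rewrite -(Gauss_dvdr _ cop) -(dvdn_addr _ (dvdn_mull k (dvdnn r))) sum_eq.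
  exact: dvdn_mull.
have r_le : r <= t + c by apply: dvdn_leq r_dvd; lia.
have k_le : k <= c * b.-1.
  have : a * r <= a * (t + c) by rewrite leq_mul2l r_le orbT.
  have r_gt0 : 0 < r by rewrite rb_gt0 //; lia.
  by rewrite -(leq_pmul2r r_gt0); nia.
by have := dvd_sum_rb_size b_gt1 (proj1 (andP c_range)) k_le r_dvd; lia.
Qed.

Lemma Sab_of_large a b n m : 0 < b -> 0 < n -> coprime (rb b n) a ->
  (forall j, 0 < j <= rb b n -> a * rb b n + minn j n.-1 * (b ^ n).-1 < m + a * j) ->
  Sab a b n m.
Proof.
move=> b_gt0 n_gt0 cop large.
have r_gt0 : 0 < rb b n by rewrite rb_gt0.
have [t t_lt t_mod] := exists_mul_modn m r_gt0 cop.
have [es [sum_es size_es]] := sum_rb_repr_min b_gt0 t_lt.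
have := large (rb b n - t) ltac:(lia); rewrite predn_exp_rb.
set r := rb b n in r_gt0 t_lt size_es *; set j := r - t in size_es * => m_large.
have at_aj : a * t + a * j = a * r by rewrite -mulnDr subnKC // ltnW.
have at_lt : a * t < m.
  by rewrite -(ltn_add2r (a * j)) at_aj; apply: leq_ltn_trans m_large; apply: leq_addr.
have r_dvd : r %| m - a * t by rewrite -eqn_mod_dvd ?t_mod // ltnW.
pose k := (m - a * t) %/ r.
have -> : m = k * r + a * \sum_(e <- es) rb b e by rewrite sum_es divnK // subnK //; lia.
apply: Sab_pad; suff : (size es).-1 < k by lia.
rewrite -(ltn_pmul2r r_gt0) divnK //.
have : (size es).-1 * r <= minn j n.-1 * (b.-1 * r) by rewrite mulnA leq_mul2r size_es orbT.
lia.
Qed.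

Theorem theorem22 (a b n : nat) :
  0 < a -> 1 < b -> 1 < n -> coprime (rb b n) a ->
  (a < b ^ n - 1 ->
     is_frobenius (Sab a b n) ((n - 1) * (b ^ n - 1 - a) + a * rb b n)) /\
  (b ^ n - 1 < a ->
     is_frobenius (Sab a b n) (a * rb b n + b ^ n - 1 - a)).
Proof.
move=> a_gt0 b_gt1 n_gt1 cop.
have b_gt0 : 0 < b by lia.
have r_ge : n <= rb b n by apply: leq_rb.
have B_eq : b ^ n - 1 = b.-1 * rb b n by rewrite subn1 predn_exp_rb.
split=> a_vs_B; split.
- apply: (notin_Sab (c := n.-1) b_gt1 cop); first lia.
  rewrite B_eq in a_vs_B *; nia.
- move=> m F_lt; apply: Sab_of_large => // [|j j_range]; first lia.
  rewrite -subn1 B_eq in a_vs_B F_lt *.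
  case: (leqP j n.-1) => _; nia.
- apply: (notin_Sab (c := 1) b_gt1 cop); first lia.
  rewrite B_eq in a_vs_B *; nia.
- move=> m F_lt; apply: Sab_of_large => // [|j j_range]; first lia.
  rewrite -subn1 B_eq in a_vs_B F_lt *.
  case: (leqP j n.-1) => _; nia.
Qed.
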